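(* For programs $\Omega_1,\Omega_2$ with weight constraints, $\Omega_1$ is strongly equivalent to $\Omega_2$ (as programs with weight constraints) if and only if $[\Omega_1]$ is strongly equivalent to $[\Omega_2]$ (as programs with nested expressions).
   Context: Programs with nested expressions. A literal is a propositional atom $a$ or its classical negation $\neg a$; a set of literals is consistent if it contains no pair $a,\neg a$. Elementary formulas are literals, $\bot$, $\top$. Formulas are built with $\mathit{not}$, '','' (conjunction) and '';'' (disjunction). A rule is $\mathit{Head}\leftarrow\mathit{Body}$ with formulas; a program is a set of rules. For consistent $Z$: $Z\models l$ iff $l\in Z$; $Z\models\top$; $Z\not\models\bot$; $Z\models(F,G)$ iff both; $Z\models(F;G)$ iff at least one; $Z\models\mathit{not}\,F$ iff $Z\not\models F$; $Z$ satisfies a program if $Z\models\mathit{Body}$ implies $Z\models\mathit{Head}$ for every rule. Reduct: $F^Z=F$ for elementary $F$, commutes with '','' and '';'', $(\mathit{not}\,F)^Z=\bot$ if $Z\models F$, $\top$ otherwise; $\Pi^Z$ applies this to heads and bodies. $Z$ is an answer set of a $\mathit{not}$-free program if it is a minimal consistent set satisfying it, and of $\Pi$ if it is an answer set of $\Pi^Z$. Programs $\Pi_1,\Pi_2$ with nested expressions are strongly equivalent if for every program $\Pi$ with nested expressions, $\Pi_1\cup\Pi$ and $\Pi_2\cup\Pi$ have the same answer sets. $\langle F_1,\dots,F_n\rangle:X$ is the disjunction over $I\in X$ of the conjunctions of $F_i$, $i\in I$ (empty conjunction $\top$, empty disjunction $\bot$). Programs with weight constraints. A rule element is a literal $l$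 (positive) or $\mathit{not}\,l$ (negative). A weight constraint is $L\le\{c_1=w_1,\dots,c_m=w_m\}\le U$ ($L,U$ reals or $\pm\infty$, $w_i\ge0$ reals). A rule is $C_0\leftarrow C_1,\dots,C_n$ with weight constraints; the rule elements of $C_0$ are its head elements; a program is a set of rules; a literal $c$ is identified with $1\le\{c=1\}$. $Z$ satisfies a constraint if $L\le\sum_{j:Z\models c_j}w_j\le U$, and a program if every rule whose body constraints are all satisfied has its head satisfied. $(L\le S)^Z=L^Z\le S'$, where $S'$ drops negative pairs and $L^Z$ is $L$ minus the sum of weights of negative pairs $c=w$ with $Z\models c$. The reduct of $L_0\le S_0\le U_0\leftarrow L_1\le S_1\le U_1,\dots,L_n\le S_n\le U_n$ is, if $Z\models S_i\le U_i$ for all $i\ge1$, the rules $l\leftarrow(L_1\le S_1)^Z,\dots,(L_n\le S_n)^Z$ for the positive head elements $l\in Z$; otherwise empty. $\Omega^Z$ is the union; $\mathit{cl}(\Omega^Z)$ is its unique minimal satisfying set of literals. $Z$ is an answer set of $\Omega$ if $Z\models\Omega$ and $\mathit{cl}(\Omega^Z)=Z$. $\Omega_1,\Omega_2$ are strongly equivalent if for every program $\Omega$ with weight constraints, $\Omega_1\cup\Omega$ and $\Omega_2\cup\Omega$ have the same answer sets. Translation: $[w\le S]=\langle c_1,\dots,c_m\rangle:\{I: w\le\sum_{i\in I}w_i\}$, $[w<S]=\langle c_1,\dots,c_m\rangle:\{I: w<\sum_{i\in I}w_i\}$, $[S\le U]=\mathit{not}\,[U<S]$, $[L\le S\le U]=[L\le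 S],[S\le U]$; $[\Omega]$ replaces each rule $C_0\leftarrow C_1,\dots,C_n$ by $(l_1;\mathit{not}\,l_1),\dots,(l_p;\mathit{not}\,l_p),[C_0]\leftarrow[C_1],\dots,[C_n]$, $l_1,\dots,l_p$ the positive head elements. *)

From Stdlib Require Import Reals List Bool.
From Coquelicot Require Import Rbar.
Import ListNotations.
Open Scope R_scope.
Set Implicit Arguments.

(* Atoms range over an arbitrary type [A]; a literal is an atom or its classical negation. *)
Inductive lit (A : Type) : Type :=
| Atom : A -> lit A
| NegA : A -> lit A.
Arguments Atom {A} _.
Arguments NegA {A} _.

Definition lset (A : Type) := lit A -> bool.

Definition consistent (A : Type) (Z : lset A) : Prop :=
  forall a : A, Z (Atom a) && Z (NegA a) = false.

Definition lsubset (A : Type) (Z1 Z2 : lset A) : Prop :=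
  forall l, Z1 l = true -> Z2 l = true.

Inductive formula (A : Type) : Type :=
| FLit : lit A -> formula A
| FBot : formula A
| FTop : formula A
| FNot : formula A -> formula A
| FAnd : formula A -> formula A -> formula A
| FOr  : formula A -> formula A -> formula A.
Arguments FBot {A}.
Arguments FTop {A}.

Fixpoint fsat (A : Type) (Z : lset A) (F : formula A) : bool :=
  match F with
  | FLit l => Z l
  | FBot => false
  | FTop => true
  | FNot G => negb (fsat Z G)
  | FAnd G H => fsat Z G && fsat Z H
  | FOr G H => fsat Z G || fsat Z H
  end.

Record nrule (A : Type) : Type := NRule { nhead : formula A; nbody : formula A }.

Definition nprogram (A : Type) := nrule A -> Prop.

Definition nunion (A : Type) (P1 P2 : nprogram A) : nprogram A :=
  fun r => P1 r \/ P2 r.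

Definition nsat_prog (A : Type) (Z : lset A) (P : nprogram A) : Prop :=
  forall r, P r -> fsat Z (nbody r) = true -> fsat Z (nhead r) = true.

Fixpoint freduct (A : Type) (Z : lset A) (F : formula A) : formula A :=
  match F with
  | FNot G => if fsat Z G then FBot else FTop
  | FAnd G H => FAnd (freduct Z G) (freduct Z H)
  | FOr G H => FOr (freduct Z G) (freduct Z H)
  | _ => F
  end.

Definition nreduct (A : Type) (P : nprogram A) (Z : lset A) : nprogram A :=
  fun r' => exists r, P r /\ r' = NRule (freduct Z (nhead r)) (freduct Z (nbody r)).

Definition answer_set_notfree (A : Type) (P : nprogram A) (Z : lset A) : Prop :=
  consistent Z /\ nsat_prog Z P /\
  (forall Z', consistent Z' -> lsubset Z' Z -> nsat_prog Z' P -> lsubset Z Z').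

Definition nanswer_set (A : Type) (P : nprogram A) (Z : lset A) : Prop :=
  answer_set_notfree (nreduct P Z) Z.

Definition nstrong_equiv (A : Type) (P1 P2 : nprogram A) : Prop :=
  forall (P : nprogram A) (Z : lset A),
    nanswer_set (nunion P1 P) Z <-> nanswer_set (nunion P2 P) Z.

(* A rule element: a literal l (positive) or "not l" (negative). *)
Inductive relem (A : Type) : Type :=
| PosE : lit A -> relem A
| NotE : lit A -> relem A.

(* L <= {c_1 = w_1, ..., c_m = w_m} <= U, with L, U extended reals. *)
Record wconstr (A : Type) : Type :=
  WC { lower : Rbar; elems : list (relem A * R); upper : Rbar }.

Record wrule (A : Type) : Type := WRule { whead : wconstr A; wbody : list (wconstr A) }.

Definition wprogram (A : Type) := wrule A -> Prop.

Definition wunion (A : Type) (P1 P2 : wprogram A) : wprogram A :=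
  fun r => P1 r \/ P2 r.

Definition wf_wprogram (A : Type) (P : wprogram A) : Prop :=
  forall r, P r -> forall C, (C = whead r \/ In C (wbody r)) ->
    forall p, In p (elems C) -> 0 <= snd p.

Definition resat (A : Type) (Z : lset A) (e : relem A) : bool :=
  match e with PosE l => Z l | NotE l => negb (Z l) end.

Fixpoint wsum (A : Type) (Z : lset A) (S : list (relem A * R)) : R :=
  match S with
  | [] => 0
  | p :: S' => (if resat Z (fst p) then snd p else 0) + wsum Z S'
  end.

Definition wc_sat (A : Type) (Z : lset A) (C : wconstr A) : Prop :=
  Rbar_le (lower C) (Finite (wsum Z (elems C))) /\
  Rbar_le (Finite (wsum Z (elems C))) (upper C).

Definition wsat_prog (A : Type) (Z : lset A) (P : wprogram A) : Prop :=
  forall r, P r -> (forall C, In C (wbody r) -> wc_sat Z C) -> wc_sat Z (whead r).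

(* Rules of the reduct: l <- (L_1 <= S_1'), ..., (L_n <= S_n'),
   with S_i' consisting of positive pairs only. *)
Record prule (A : Type) : Type :=
  PRule { phead : lit A; pbody : list (Rbar * list (lit A * R)) }.

Definition pprogram (A : Type) := prule A -> Prop.

Fixpoint psum (A : Type) (Z : lset A) (S : list (lit A * R)) : R :=
  match S with
  | [] => 0
  | p :: S' => (if Z (fst p) then snd p else 0) + psum Z S'
  end.

Definition plower_sat (A : Type) (Z : lset A) (c : Rbar * list (lit A * R)) : Prop :=
  Rbar_le (fst c) (Finite (psum Z (snd c))).

Definition psat_prog (A : Type) (Z : lset A) (P : pprogram A) : Prop :=
  forall r, P r -> (forall c, In c (pbody r) -> plower_sat Z c) -> Z (phead r) = true.

Fixpoint pos_part (A : Type) (S : list (relem A * R)) : list (lit A * R) :=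
  match S with
  | [] => []
  | (PosE l, w) :: S' => (l, w) :: pos_part S'
  | (NotE _, _) :: S' => pos_part S'
  end.

Fixpoint neg_sum (A : Type) (Z : lset A) (S : list (relem A * R)) : R :=
  match S with
  | [] => 0
  | (PosE _, _) :: S' => neg_sum Z S'
  | (NotE l, w) :: S' => (if Z l then 0 else w) + neg_sum Z S'
  end.

Definition lower_reduct (A : Type) (Z : lset A) (C : wconstr A) : Rbar * list (lit A * R) :=
  (Rbar_minus (lower C) (Finite (neg_sum Z (elems C))), pos_part (elems C)).

Definition upper_sat (A : Type) (Z : lset A) (C : wconstr A) : Prop :=
  Rbar_le (Finite (wsum Z (elems C))) (upper C).

Definition wreduct (A : Type) (P : wprogram A) (Z : lset A) : pprogram A :=
  fun pr => exists r, P r /\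
    (forall C, In C (wbody r) -> upper_sat Z C) /\
    In (PosE (phead pr)) (map fst (elems (whead r))) /\
    Z (phead pr) = true /\
    pbody pr = map (lower_reduct Z) (wbody r).

Definition is_cl (A : Type) (P : pprogram A) (Z : lset A) : Prop :=
  psat_prog Z P /\ forall Z', psat_prog Z' P -> lsubset Z Z'.

Definition wanswer_set (A : Type) (P : wprogram A) (Z : lset A) : Prop :=
  consistent Z /\ wsat_prog Z P /\ is_cl (wreduct P Z) Z.

Definition wstrong_equiv (A : Type) (P1 P2 : wprogram A) : Prop :=
  forall (P : wprogram A), wf_wprogram P -> forall Z : lset A,
    wanswer_set (wunion P1 P) Z <-> wanswer_set (wunion P2 P) Z.

Definition re_formula (A : Type) (e : relem A) : formula A :=
  match e with PosE l => FLit l | NotE l => FNot (FLit l) end.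

Fixpoint conj (A : Type) (Fs : list (formula A)) : formula A :=
  match Fs with
  | [] => FTop
  | [F] => F
  | F :: Fs' => FAnd F (conj Fs')
  end.

Fixpoint disj (A : Type) (Fs : list (formula A)) : formula A :=
  match Fs with
  | [] => FBot
  | [F] => F
  | F :: Fs' => FOr F (disj Fs')
  end.

Fixpoint subfamilies (X : Type) (s : list X) : list (list X) :=
  match s with
  | [] => [[]]
  | x :: s' => map (cons x) (subfamilies s') ++ subfamilies s'
  end.

Fixpoint sumw (A : Type) (I : list (relem A * R)) : R :=
  match I with [] => 0 | p :: I' => snd p + sumw I' end.

Definition family_formula (A : Type) (I : list (relem A * R)) : formula A :=
  conj (map (fun p => re_formula (fst p)) I).

Definition tr_le (A : Type) (w : Rbar) (S : list (relem A * R)) : formula A :=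
  disj (map (@family_formula A)
    (filter (fun I => if Rbar_le_dec w (Finite (sumw I)) then true else false)
            (subfamilies S))).

Definition tr_lt (A : Type) (w : Rbar) (S : list (relem A * R)) : formula A :=
  disj (map (@family_formula A)
    (filter (fun I => if Rbar_lt_dec w (Finite (sumw I)) then true else false)
            (subfamilies S))).

Definition tr_constr (A : Type) (C : wconstr A) : formula A :=
  FAnd (tr_le (lower C) (elems C)) (FNot (tr_lt (upper C) (elems C))).

Fixpoint pos_elems (A : Type) (S : list (relem A * R)) : list (lit A) :=
  match S with
  | [] => []
  | (PosE l, _) :: S' => l :: pos_elems S'
  | (NotE _, _) :: S' => pos_elems S'
  end.

Definition tr_rule (A : Type) (r : wrule A) : nrule A :=
  NRule (conj (map (fun l => FOr (FLit l) (FNot (FLit l))) (pos_elems (elems (whead r)))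
               ++ [tr_constr (whead r)]))
        (conj (map (@tr_constr A) (wbody r))).

Definition tr_prog (A : Type) (P : wprogram A) : nprogram A :=
  fun nr => exists r, P r /\ nr = tr_rule r.

From Stdlib Require Import Reals List Lra Bool Classical.
From Stdlib Require Import FunctionalExtensionality PropExtensionality.
From Coquelicot Require Import Rbar.
Import ListNotations.
Open Scope R_scope.

(* The translation stays faithful after taking reducts: [X] satisfies [[C]^Y] exactly
   when the positive elements true in [X] and the negated ones true in [Y] reach the
   lower bound of [C] while [Y] respects its upper bound, which is what [(L <= S)^Y]
   expresses.  Hence [Omega] and [[Omega]] have the same SE-models [(X, Y)] with [X]
   below [Y], and so the same answer sets; since the translation commutes with unions,
   strong equivalence of the translations yields that of the programs.  Conversely,
   strongly equivalent weight-constraint programs have the same SE-models: adding the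
   facts of [X] and the rules [l <- l'] for [l, l'] in [Y \ X] makes a model [Y] an
   answer set exactly when [(X, Y)] is not an SE-model.  Answer sets of a nested program extended
   by an arbitrary [Pi] depend only on its SE-models. *)

Section ReductOfTranslation.
Context {A : Type}.
Implicit Types (X Y Z : lset A) (F : formula A) (S I : list (relem A * R)).

Lemma fsat_freduct_id Z F : fsat Z (freduct Z F) = fsat Z F.
Proof.
  induction F as [| | |F _|F IHF G IHG|F IHF G IHG]; simpl; try reflexivity.
  - now destruct (fsat Z F).
  - now rewrite IHF, IHG.
  - now rewrite IHF, IHG.
Qed.

Lemma fsat_freduct_not X Y F : fsat X (freduct Y (FNot F)) = negb (fsat Y F).
Proof. simpl. now destruct (fsat Y F). Qed.

Lemma fsat_freduct_conj X Y Fs :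
  fsat X (freduct Y (conj Fs)) = forallb (fun F => fsat X (freduct Y F)) Fs.
Proof.
  induction Fs as [|F [|G Fs] IH]; [reflexivity| |].
  - simpl. now rewrite andb_true_r.
  - change (fsat X (freduct Y F) && fsat X (freduct Y (conj (G :: Fs))) =
            fsat X (freduct Y F) && forallb (fun F => fsat X (freduct Y F)) (G :: Fs)).
    now rewrite IH.
Qed.

Lemma fsat_freduct_disj X Y Fs :
  fsat X (freduct Y (disj Fs)) = existsb (fun F => fsat X (freduct Y F)) Fs.
Proof.
  induction Fs as [|F [|G Fs] IH]; [reflexivity| |].
  - simpl. now rewrite orb_false_r.
  - change (fsat X (freduct Y F) || fsat X (freduct Y (disj (G :: Fs))) =
            fsat X (freduct Y F) || existsb (fun F => fsat X (freduct Y F)) (G :: Fs)).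
    now rewrite IH.
Qed.

(* Satisfaction by [X] of a rule element in the reduct with respect to [Y]:
   positive elements are read in [X], negated ones in [Y]. *)
Definition htsat X Y (e : relem A) : bool :=
  match e with PosE l => X l | NotE l => negb (Y l) end.

Fixpoint htsum X Y S : R :=
  match S with
  | [] => 0
  | p :: S' => (if htsat X Y (fst p) then snd p else 0) + htsum X Y S'
  end.

Lemma fsat_freduct_re X Y e : fsat X (freduct Y (re_formula e)) = htsat X Y e.
Proof. destruct e as [l|l]; simpl; [reflexivity | now destruct (Y l)]. Qed.

Lemma fsat_freduct_family X Y I :
  fsat X (freduct Y (family_formula I)) = forallb (fun p => htsat X Y (fst p)) I.
Proof.
  unfold family_formula. rewrite fsat_freduct_conj.
  induction I as [|p I IH]; [reflexivity|]. simpl. now rewrite fsat_freduct_re, IH.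
Qed.

Definition nonneg_weights S := forall p, In p S -> 0 <= snd p.

Lemma nonneg_weights_cons p S : nonneg_weights (p :: S) <-> 0 <= snd p /\ nonneg_weights S.
Proof.
  split.
  - intros H. split; [apply H; now left | intros q Hq; apply H; now right].
  - intros [Hp H] q [<-|Hq]; auto.
Qed.

Lemma sumw_le_htsum X Y S I : nonneg_weights S -> In I (subfamilies S) ->
  forallb (fun p => htsat X Y (fst p)) I = true -> sumw I <= htsum X Y S.
Proof.
  revert I; induction S as [|p S IH]; intros I HS HI Hsat.
  - destruct HI as [<-|[]]. simpl; lra.
  - apply nonneg_weights_cons in HS as [Hp HS]. simpl in HI |- *.
    apply in_app_or in HI as [HI|HI].
    + apply in_map_iff in HI as [I' [<- HI']].
      simpl in Hsat. apply andb_true_iff in Hsat as [-> Hsat].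
      specialize (IH I' HS HI' Hsat). simpl; lra.
    + specialize (IH I HS HI Hsat). destruct (htsat X Y (fst p)); lra.
Qed.

Lemma satisfied_subfamily X Y S :
  let I := filter (fun p => htsat X Y (fst p)) S in
  In I (subfamilies S) /\ forallb (fun p => htsat X Y (fst p)) I = true /\
  sumw I = htsum X Y S.
Proof.
  induction S as [|p S [IH1 [IH2 IH3]]]; simpl.
  - split; [now left | split; reflexivity].
  - destruct (htsat X Y (fst p)) eqn:Hp; simpl.
    + rewrite Hp, IH2, IH3. split; [apply in_or_app; left; now apply in_map | auto].
    + split; [apply in_or_app; now right | split; [exact IH2 | lra]].
Qed.

Lemma fsat_freduct_threshold X Y (q : R -> bool) S :
  (forall a b, a <= b -> q a = true -> q b = true) -> nonneg_weights S ->
  fsat X (freduct Y (disj (map (@family_formula A)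
                                (filter (fun I => q (sumw I)) (subfamilies S))))) =
  q (htsum X Y S).
Proof.
  intros Hq HS. apply eq_true_iff_eq.
  rewrite fsat_freduct_disj, existsb_exists. split.
  - intros [F [HF Hsat]]. apply in_map_iff in HF as [I [<- HI]].
    apply filter_In in HI as [HI HqI]. rewrite fsat_freduct_family in Hsat.
    exact (Hq _ _ (sumw_le_htsum X Y S I HS HI Hsat) HqI).
  - intros HqS. destruct (satisfied_subfamily X Y S) as [HI [Hsat Hsum]].
    eexists; split; [apply in_map, filter_In; split; [exact HI|] |].
    + rewrite Hsum. exact HqS.
    + rewrite fsat_freduct_family. exact Hsat.
Qed.

Lemma fsat_tr_le X Y w S : nonneg_weights S ->
  fsat X (freduct Y (tr_le w S)) = true <-> Rbar_le w (htsum X Y S).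
Proof.
  intros HS. unfold tr_le.
  rewrite (fsat_freduct_threshold X Y
             (fun a => if Rbar_le_dec w (Finite a) then true else false)); [| |exact HS].
  - destruct Rbar_le_dec; split; auto; discriminate.
  - intros a b Hab. do 2 destruct Rbar_le_dec; auto. intros _.
    exfalso. eauto using Rbar_le_trans.
Qed.

Lemma fsat_tr_lt X Y w S : nonneg_weights S ->
  fsat X (freduct Y (tr_lt w S)) = true <-> Rbar_lt w (htsum X Y S).
Proof.
  intros HS. unfold tr_lt.
  rewrite (fsat_freduct_threshold X Y
             (fun a => if Rbar_lt_dec w (Finite a) then true else false)); [| |exact HS].
  - destruct Rbar_lt_dec; split; auto; discriminate.
  - intros a b Hab. do 2 destruct Rbar_lt_dec; auto. intros _.
    exfalso. eauto using Rbar_lt_le_trans.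
Qed.

Lemma wsum_htsum Z S : wsum Z S = htsum Z Z S.
Proof. induction S as [|[[l|l] w] S IH]; simpl; now rewrite ?IH. Qed.

Lemma htsum_split X Y S : htsum X Y S = psum X (pos_part S) + neg_sum Y S.
Proof.
  induction S as [|[[l|l] w] S IH]; simpl; rewrite ?IH; [lra|lra|].
  destruct (Y l); simpl; lra.
Qed.

Lemma wc_sat_htsum Z C :
  wc_sat Z C <-> Rbar_le (lower C) (htsum Z Z (elems C)) /\ upper_sat Z C.
Proof. unfold wc_sat, upper_sat. now rewrite wsum_htsum. Qed.

Lemma plower_sat_lower_reduct X Y C :
  plower_sat X (lower_reduct Y C) <-> Rbar_le (lower C) (htsum X Y (elems C)).
Proof.
  unfold plower_sat, lower_reduct. simpl. rewrite htsum_split.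
  destruct (lower C) as [r| |]; simpl; split; auto; lra.
Qed.

(* The negated part [not [U < S]] of [[C]] is evaluated in [Y] only. *)
Lemma fsat_tr_constr X Y C : nonneg_weights (elems C) ->
  fsat X (freduct Y (tr_constr C)) = true <->
  Rbar_le (lower C) (htsum X Y (elems C)) /\ upper_sat Y C.
Proof.
  intros HC. unfold tr_constr, upper_sat.
  change (fsat X (freduct Y (tr_le (lower C) (elems C))) &&
          fsat X (freduct Y (FNot (tr_lt (upper C) (elems C)))) = true <->
          Rbar_le (lower C) (htsum X Y (elems C)) /\
          Rbar_le (wsum Y (elems C)) (upper C)).
  rewrite andb_true_iff, fsat_tr_le, fsat_freduct_not, negb_true_iff, wsum_htsum
    by exact HC.
  rewrite <- not_true_iff_false, <- (fsat_freduct_id Y), fsat_tr_lt by exact HC.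
  split; intros [Hl Hu]; split; auto.
  - now apply Rbar_not_lt_le.
  - now apply Rbar_le_not_lt.
Qed.

End ReductOfTranslation.

Section RuleCorrespondence.
Context {A : Type}.
Implicit Types (X Y Z : lset A) (S : list (relem A * R)) (r : wrule A).

Lemma lsubset_refl Z : lsubset Z Z.
Proof. now intros l. Qed.

Lemma lset_ext X Y : lsubset X Y -> lsubset Y X -> X = Y.
Proof.
  intros HXY HYX. apply functional_extensionality. intros l.
  destruct (X l) eqn:HX; [now rewrite (HXY l HX)|].
  destruct (Y l) eqn:HY; [now rewrite (HYX l HY) in HX | reflexivity].
Qed.

Lemma htsum_mono X X' Y S : nonneg_weights S -> lsubset X X' ->
  htsum X Y S <= htsum X' Y S.
Proof.
  intros HS HX. induction S as [|[[l|l] w] S IH]; simpl; [lra| |];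
    apply nonneg_weights_cons in HS as [Hw HS]; specialize (IH HS); simpl in Hw; [|lra].
  destruct (X l) eqn:Hl; [rewrite (HX l Hl); lra|].
  destruct (X' l); lra.
Qed.

Lemma psum_mono X X' (S : list (lit A * R)) : (forall q, In q S -> 0 <= snd q) ->
  lsubset X X' -> psum X S <= psum X' S.
Proof.
  intros HS HX. induction S as [|p S IH]; simpl; [lra|].
  assert (Hp : 0 <= snd p) by (apply HS; now left).
  assert (IH' : psum X S <= psum X' S) by (apply IH; intros q Hq; apply HS; now right).
  destruct (X (fst p)) eqn:Hl; [rewrite (HX _ Hl); lra|].
  destruct (X' (fst p)); lra.
Qed.

Lemma nonneg_weights_pos_part S : nonneg_weights S ->
  forall q, In q (pos_part S) -> 0 <= snd q.
Proof.
  induction S as [|[[l|l] w] S IH]; simpl; [tauto| |];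
    intros [Hw HS]%nonneg_weights_cons; [intros q [<-|Hq]|]; auto.
Qed.

Lemma psum_pos_part_agree X Y S :
  (forall l, In l (pos_elems S) -> X l = Y l) -> psum X (pos_part S) = psum Y (pos_part S).
Proof.
  induction S as [|[[l|l] w] S IH]; simpl; intros Hagree; auto.
  rewrite (Hagree l (or_introl eq_refl)), IH; auto.
Qed.

Lemma in_pos_elems l S : In (PosE l) (map fst S) <-> In l (pos_elems S).
Proof.
  induction S as [|[[l'|l'] w] S IH]; simpl; [tauto| |]; rewrite IH; [|firstorder discriminate].
  split; intros [H|H]; auto; left; congruence.
Qed.

Definition wf_wrule r :=
  nonneg_weights (elems (whead r)) /\ forall C, In C (wbody r) -> nonneg_weights (elems C).

Lemma wf_wrule_of (P : wprogram A) r : wf_wprogram P -> P r -> wf_wrule r.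
Proof.
  intros HP Hr. split.
  - intros p Hp. exact (HP r Hr _ (or_introl eq_refl) p Hp).
  - intros C HC p Hp. exact (HP r Hr C (or_intror HC) p Hp).
Qed.

(* The choice formulas [l ; not l] of the head make [X] agree with [Y] on the
   positive head literals. *)
Lemma fsat_tr_head X Y r : nonneg_weights (elems (whead r)) ->
  fsat X (freduct Y (nhead (tr_rule r))) = true <->
  (forall l, In l (pos_elems (elems (whead r))) -> Y l = true -> X l = true) /\
  Rbar_le (lower (whead r)) (htsum X Y (elems (whead r))) /\ upper_sat Y (whead r).
Proof.
  intros Hh. unfold tr_rule. simpl nhead.
  rewrite fsat_freduct_conj, forallb_app, andb_true_iff. cbn [forallb].
  rewrite andb_true_r, fsat_tr_constr, forallb_forall by exact Hh.
  assert (Hchoice : forall l, fsat X (freduct Y (FOr (FLit l) (FNot (FLit l)))) = true <->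
                              (Y l = true -> X l = true)).
  { intros l. simpl. destruct (Y l), (X l); simpl; intuition discriminate. }
  split; intros [Hpos Hc]; split; auto.
  - intros l Hl. apply Hchoice, Hpos.
    exact (in_map (fun l => FOr (FLit l) (FNot (FLit l))) _ _ Hl).
  - intros F HF. apply in_map_iff in HF as [l [<- Hl]]. apply Hchoice, Hpos, Hl.
Qed.

Lemma fsat_tr_body X Y r : (forall C, In C (wbody r) -> nonneg_weights (elems C)) ->
  fsat X (freduct Y (nbody (tr_rule r))) = true <->
  forall C, In C (wbody r) ->
    Rbar_le (lower C) (htsum X Y (elems C)) /\ upper_sat Y C.
Proof.
  intros Hb. unfold tr_rule. simpl nbody.
  rewrite fsat_freduct_conj, forallb_forall. split.
  - intros H C HC. apply fsat_tr_constr; auto. apply H, in_map, HC.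
  - intros H F HF. apply in_map_iff in HF as [C [<- HC]]. apply fsat_tr_constr; auto.
Qed.

Definition wsat_rule Z r : Prop :=
  (forall C, In C (wbody r) -> wc_sat Z C) -> wc_sat Z (whead r).

(* [X] satisfies the rules [l <- (L_1 <= S_1)^Y, ...] that [r] contributes to [Omega^Y]. *)
Definition wsat_rule_reduct X Y r : Prop :=
  (forall C, In C (wbody r) -> upper_sat Y C) ->
  forall l, In (PosE l) (map fst (elems (whead r))) -> Y l = true ->
  (forall c, In c (map (lower_reduct Y) (wbody r)) -> plower_sat X c) -> X l = true.

Definition nsat_rule_reduct X Y (r : nrule A) : Prop :=
  fsat X (freduct Y (nbody r)) = true -> fsat X (freduct Y (nhead r)) = true.

Lemma wsat_rule_tr Y r : wf_wrule r -> wsat_rule Y r <-> nsat_rule_reduct Y Y (tr_rule r).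
Proof.
  intros [Hh Hb]. unfold wsat_rule, nsat_rule_reduct.
  rewrite fsat_tr_body, fsat_tr_head by assumption.
  setoid_rewrite wc_sat_htsum. firstorder.
Qed.

Lemma wsat_rule_reduct_tr X Y r : wf_wrule r -> lsubset X Y -> wsat_rule Y r ->
  wsat_rule_reduct X Y r <-> nsat_rule_reduct X Y (tr_rule r).
Proof.
  intros [Hh Hb] HXY HY. unfold wsat_rule_reduct, nsat_rule_reduct.
  rewrite fsat_tr_body, fsat_tr_head by assumption.
  setoid_rewrite in_pos_elems. setoid_rewrite in_map_iff.
  split.
  - intros Hred HB.
    assert (Hpos : forall l, In l (pos_elems (elems (whead r))) -> Y l = true -> X l = true).
    { intros l Hl HYl. apply Hred; auto; [intros C HC; apply HB, HC|].
      intros c [C [<- HC]]. apply plower_sat_lower_reduct, HB, HC. }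
    assert (HYbody : forall C, In C (wbody r) -> wc_sat Y C).
    { intros C HC. apply wc_sat_htsum. destruct (HB C HC) as [Hl Hu]. split; [|exact Hu].
      eapply Rbar_le_trans; [exact Hl|]. apply htsum_mono; auto. }
    apply HY, wc_sat_htsum in HYbody as [Hl Hu].
    split; [exact Hpos | split; [|exact Hu]].
    rewrite htsum_split, (psum_pos_part_agree X Y), <- htsum_split; [exact Hl|].
    intros l Hl'. destruct (Y l) eqn:HYl; [now apply Hpos|].
    destruct (X l) eqn:HXl; [now rewrite (HXY l HXl) in HYl | reflexivity].
  - intros Hred Hu l Hl HYl Hlow. apply Hred; [|exact Hl|exact HYl].
    intros C HC. split; [|exact (Hu C HC)].
    apply plower_sat_lower_reduct, Hlow. eauto.
Qed.

End RuleCorrespondence.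

Section AnswerSets.
Context {A : Type}.
Implicit Types (X Y Z : lset A).

(* SE-models in the sense of Turner: [Y] is a model of the program and [X] a model
   of its reduct with respect to [Y]. *)
Definition wse_model (P : wprogram A) X Y : Prop :=
  wsat_prog Y P /\ psat_prog X (wreduct P Y).

Definition nse_model (P : nprogram A) X Y : Prop :=
  nsat_prog Y (nreduct P Y) /\ nsat_prog X (nreduct P Y).

Lemma wse_model_rules (P : wprogram A) X Y :
  wse_model P X Y <-> forall r, P r -> wsat_rule Y r /\ wsat_rule_reduct X Y r.
Proof.
  unfold wse_model, wsat_prog, psat_prog, wsat_rule, wsat_rule_reduct. split.
  - intros [HY HX] r Hr. split; [now apply HY|].
    intros Hu l Hl HYl Hlow.
    apply (HX (PRule l (map (lower_reduct Y) (wbody r)))); [|exact Hlow].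
    exists r. simpl. auto.
  - intros H. split; [intros r Hr; exact (proj1 (H r Hr))|].
    intros pr [r [Hr [Hu [Hl [HYl ->]]]]]. exact (proj2 (H r Hr) Hu _ Hl HYl).
Qed.

Lemma nsat_prog_nreduct_tr (P : wprogram A) X Y :
  nsat_prog X (nreduct (tr_prog P) Y) <-> forall r, P r -> nsat_rule_reduct X Y (tr_rule r).
Proof.
  unfold nsat_prog, nreduct, tr_prog, nsat_rule_reduct. split.
  - intros H r Hr. apply (H (NRule _ _)). eauto.
  - intros H r' [nr [[r [Hr ->]] ->]]. exact (H r Hr).
Qed.

Lemma wse_model_tr (P : wprogram A) X Y : wf_wprogram P -> lsubset X Y ->
  wse_model P X Y <-> nse_model (tr_prog P) X Y.
Proof.
  intros HP HXY. unfold nse_model. rewrite wse_model_rules, !nsat_prog_nreduct_tr. split.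
  - intros H. split; intros r Hr; pose proof (wf_wrule_of P r HP Hr) as Hw;
      destruct (H r Hr) as [HY HX].
    + now apply wsat_rule_tr.
    + now apply wsat_rule_reduct_tr.
  - intros [HY HX] r Hr. pose proof (wf_wrule_of P r HP Hr) as Hw.
    assert (HYr : wsat_rule Y r) by (apply wsat_rule_tr; auto).
    split; [exact HYr | apply wsat_rule_reduct_tr; auto].
Qed.

Lemma psat_wreduct_id (P : wprogram A) Z : psat_prog Z (wreduct P Z).
Proof. now intros pr [r [_ [_ [_ [HZ _]]]]]. Qed.

Lemma wse_model_diag (P : wprogram A) Z : wse_model P Z Z <-> wsat_prog Z P.
Proof. split; [now intros [HZ _] | split; auto using psat_wreduct_id]. Qed.

(* The reduct [Omega^Z] is a positive program, so its models are closed under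
   intersection with [Z]. *)
Lemma psat_wreduct_inter (P : wprogram A) Z Z' : wf_wprogram P ->
  psat_prog Z' (wreduct P Z) -> psat_prog (fun l => Z l && Z' l) (wreduct P Z).
Proof.
  intros HP HZ' pr Hpr Hbody. apply andb_true_iff. split.
  - now destruct Hpr as [r [_ [_ [_ [HZ _]]]]].
  - apply (HZ' pr Hpr). intros c Hc. specialize (Hbody c Hc).
    destruct Hpr as [r [Hr [_ [_ [_ Hpb]]]]]. rewrite Hpb in Hc.
    apply in_map_iff in Hc as [C [<- HC]].
    eapply Rbar_le_trans; [exact Hbody|]. simpl. apply psum_mono.
    + apply nonneg_weights_pos_part, (wf_wrule_of P r HP Hr), HC.
    + intros l Hl. now apply andb_true_iff in Hl.
Qed.

Lemma wanswer_setE (P : wprogram A) Z : wf_wprogram P ->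
  wanswer_set P Z <-> consistent Z /\ wsat_prog Z P /\
                      forall X, lsubset X Z -> wse_model P X Z -> lsubset Z X.
Proof.
  intros HP. unfold wanswer_set, is_cl. split.
  - intros [Hc [HZ [_ Hmin]]]. split; [exact Hc|]. split; [exact HZ|].
    intros X _ [_ HX]. now apply Hmin.
  - intros [Hc [HZ Hmin]]. split; [exact Hc|]. split; [exact HZ|].
    split; [apply psat_wreduct_id|]. intros Z' HZ'. set (W := fun l => Z l && Z' l).
    assert (HWZ : lsubset W Z) by (intros l Hl; now apply andb_true_iff in Hl).
    assert (HWZ' : lsubset W Z') by (intros l Hl; now apply andb_true_iff in Hl).
    intros l Hl. apply HWZ', (Hmin W HWZ); [|exact Hl].
    split; [exact HZ | exact (psat_wreduct_inter P Z Z' HP HZ')].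
Qed.

Lemma nanswer_setE (P : nprogram A) Z :
  nanswer_set P Z <-> consistent Z /\ nsat_prog Z (nreduct P Z) /\
                      forall X, lsubset X Z -> nsat_prog X (nreduct P Z) -> lsubset Z X.
Proof.
  unfold nanswer_set, answer_set_notfree. split.
  - intros [Hc [HZ Hmin]]. repeat split; auto.
    intros X HXZ HX. apply Hmin; auto. intros a. specialize (Hc a).
    destruct (X (Atom a)) eqn:Ha, (X (NegA a)) eqn:Hna; auto.
    now rewrite (HXZ _ Ha), (HXZ _ Hna) in Hc.
  - intros [Hc [HZ Hmin]]. repeat split; auto.
Qed.

Lemma wanswer_set_tr (P : wprogram A) Z : wf_wprogram P ->
  wanswer_set P Z <-> nanswer_set (tr_prog P) Z.
Proof.
  intros HP. rewrite wanswer_setE, nanswer_setE by exact HP.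
  assert (HZ : wsat_prog Z P <-> nsat_prog Z (nreduct (tr_prog P) Z)).
  { rewrite <- wse_model_diag, wse_model_tr by auto using lsubset_refl.
    unfold nse_model. tauto. }
  assert (HX : wsat_prog Z P -> forall X, lsubset X Z ->
                 wse_model P X Z <-> nsat_prog X (nreduct (tr_prog P) Z)).
  { intros HPZ X HXZ. rewrite wse_model_tr by auto. unfold nse_model. tauto. }
  split; intros [Hc [HPZ Hmin]]; split; try exact Hc.
  - split; [now apply HZ|]. intros X HXZ HXP. apply Hmin, HX; auto.
  - apply HZ in HPZ. split; [exact HPZ|]. intros X HXZ HXP. apply Hmin; auto. now apply HX.
Qed.

Lemma tr_prog_wunion (P1 P2 : wprogram A) :
  tr_prog (wunion P1 P2) = nunion (tr_prog P1) (tr_prog P2).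
Proof.
  apply functional_extensionality. intros nr. apply propositional_extensionality.
  unfold tr_prog, wunion, nunion. firstorder.
Qed.

End AnswerSets.

Section StrongEquivalence.
Context {A : Type}.
Implicit Types (X Y Z W : lset A) (P : wprogram A) (N : nprogram A).

Lemma wf_wunion P1 P2 : wf_wprogram P1 -> wf_wprogram P2 -> wf_wprogram (wunion P1 P2).
Proof. intros H1 H2 r [Hr|Hr]; [apply H1|apply H2]; exact Hr. Qed.

Lemma wse_model_wunion P1 P2 X Y :
  wse_model (wunion P1 P2) X Y <-> wse_model P1 X Y /\ wse_model P2 X Y.
Proof. rewrite !wse_model_rules. unfold wunion. firstorder. Qed.

Lemma nsat_prog_nreduct_nunion N1 N2 X Y :
  nsat_prog X (nreduct (nunion N1 N2) Y) <->
  nsat_prog X (nreduct N1 Y) /\ nsat_prog X (nreduct N2 Y).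
Proof. unfold nsat_prog, nreduct, nunion. firstorder (subst; eauto). Qed.

Definition wfact (l : lit A) : wrule A := WRule (WC (Finite 1) [(PosE l, 1)] p_infty) [].

Definition wimp (l l' : lit A) : wrule A :=
  WRule (WC (Finite 1) [(PosE l, 1)] p_infty) [WC (Finite 1) [(PosE l', 1)] p_infty].

(* The facts of [X] and the rules [l <- l'] for [l, l'] in [Y \ X]: the only
   [W] below [Y] with [(W, Y)] an SE-model of it are [X] and [Y]. *)
Definition test_program X Y : wprogram A := fun r =>
  (exists l, X l = true /\ r = wfact l) \/
  (exists l l', Y l = true /\ X l = false /\ Y l' = true /\ X l' = false /\ r = wimp l l').

Lemma wf_test_program X Y : wf_wprogram (test_program X Y).
Proof.
  intros r [[l [_ ->]]|[l [l' [_ [_ [_ [_ ->]]]]]]] C HC p Hp; simpl in HC.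
  - destruct HC as [->|[]]. destruct Hp as [<-|[]]. simpl; lra.
  - destruct HC as [->|[<-|[]]]; destruct Hp as [<-|[]]; simpl; lra.
Qed.

Lemma wse_model_test_program X Y : lsubset X Y -> wse_model (test_program X Y) X Y.
Proof.
  intros HXY. split.
  - intros r [[l [Hl ->]]|[l [l' [Hl [_ [_ [_ ->]]]]]]] _; unfold wc_sat; simpl.
    + rewrite (HXY l Hl). simpl. split; [lra | exact I].
    + rewrite Hl. simpl. split; [lra | exact I].
  - intros pr [r [[[l [Hl ->]]|[l [l' [_ [_ [_ [Hl' ->]]]]]]] [_ [Hin [_ Hbody]]]]] Hlow.
    + simpl in Hin. destruct Hin as [Hin|[]]. now injection Hin as <-.
    + exfalso. rewrite Hbody in Hlow. specialize (Hlow _ (or_introl eq_refl)).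
      apply plower_sat_lower_reduct in Hlow. simpl in Hlow. rewrite Hl' in Hlow.
      simpl in Hlow. lra.
Qed.

Lemma psat_test_program_reduct X Y W : lsubset X Y -> lsubset W Y ->
  psat_prog W (wreduct (test_program X Y) Y) -> W = X \/ lsubset Y W.
Proof.
  intros HXY HWY HW.
  assert (HXW : lsubset X W).
  { intros l Hl. apply (HW (PRule l [])); [|intros c []].
    exists (wfact l). split; [left; eauto|]. simpl.
    split; [intros C []|]. split; [now left|]. split; [now apply HXY | reflexivity]. }
  assert (Himp : forall l l', Y l = true -> X l = false -> Y l' = true -> X l' = false ->
                              W l' = true -> W l = true).
  { intros l l' HYl HXl HYl' HXl' HWl'.
    apply (HW (PRule l [lower_reduct Y (WC (Finite 1) [(PosE l', 1)] p_infty)])).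
    - exists (wimp l l'). split; [right; exists l, l'; auto|]. simpl.
      split; [intros C [<-|[]]; exact I|]. split; [now left|]. auto.
    - intros c [<-|[]]. apply plower_sat_lower_reduct. simpl. rewrite HWl'. simpl. lra. }
  destruct (classic (exists l', Y l' = true /\ X l' = false /\ W l' = true))
    as [[l' [HYl' [HXl' HWl']]]|Hnone].
  - right. intros l HYl. destruct (X l) eqn:HXl; [now apply HXW|].
    now apply (Himp l l').
  - left. apply lset_ext; [|exact HXW]. intros l HWl.
    destruct (X l) eqn:HXl; [reflexivity|].
    exfalso. apply Hnone. exists l. auto.
Qed.

Lemma wanswer_set_wunion_test P X Y : wf_wprogram P -> consistent Y -> lsubset X Y ->
  wsat_prog Y P -> (X = Y \/ ~ psat_prog X (wreduct P Y)) ->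
  wanswer_set (wunion P (test_program X Y)) Y.
Proof.
  intros HP Hc HXY HY HX.
  apply wanswer_setE; [apply wf_wunion; auto using wf_test_program|].
  split; [exact Hc|]. split.
  - rewrite <- wse_model_diag, wse_model_wunion, !wse_model_diag.
    split; [exact HY|]. apply wse_model_diag, (wse_model_test_program X Y HXY).
  - intros W HWY [[_ HWP] [_ HWT]]%wse_model_wunion.
    destruct (psat_test_program_reduct X Y W HXY HWY HWT) as [->|HYW]; [|exact HYW].
    destruct HX as [->|HX]; [apply lsubset_refl|].
    exfalso. exact (HX HWP).
Qed.

Lemma wanswer_set_wunion_test_inv P X Y : wf_wprogram P -> lsubset X Y ->
  wse_model P X Y -> wanswer_set (wunion P (test_program X Y)) Y -> X = Y.
Proof.
  intros HP HXY HX Hans.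
  apply wanswer_setE in Hans as [_ [_ Hmin]]; [|apply wf_wunion; auto using wf_test_program].
  apply lset_ext; [exact HXY|]. apply Hmin; [exact HXY|].
  apply wse_model_wunion. split; [exact HX | now apply wse_model_test_program].
Qed.

Lemma wstrong_equiv_wse_model O1 O2 X Y : wf_wprogram O1 -> wf_wprogram O2 ->
  wstrong_equiv O1 O2 -> consistent Y -> lsubset X Y ->
  wse_model O1 X Y -> wse_model O2 X Y.
Proof.
  intros H1 H2 Hse Hc HXY [HY1 HX1].
  assert (HY2 : wsat_prog Y O2).
  { assert (Hans : wanswer_set (wunion O2 (test_program Y Y)) Y).
    { apply Hse; [apply wf_test_program|].
      apply wanswer_set_wunion_test; auto using lsubset_refl. }
    apply wanswer_setE in Hans as [_ [HY _]]; [|apply wf_wunion; auto using wf_test_program].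
    rewrite <- wse_model_diag, wse_model_wunion, !wse_model_diag in HY. tauto. }
  split; [exact HY2|].
  destruct (classic (psat_prog X (wreduct O2 Y))) as [HX2|HX2]; [exact HX2|].
  assert (Hans : wanswer_set (wunion O1 (test_program X Y)) Y).
  { apply Hse; [apply wf_test_program|]. apply wanswer_set_wunion_test; auto. }
  apply wanswer_set_wunion_test_inv in Hans; [|auto|auto|split; auto].
  subst X. apply psat_wreduct_id.
Qed.

Lemma nanswer_set_nunion_se N1 N2 N Z :
  (forall X Y, consistent Y -> lsubset X Y -> nse_model N1 X Y <-> nse_model N2 X Y) ->
  nanswer_set (nunion N1 N) Z -> nanswer_set (nunion N2 N) Z.
Proof.
  unfold nse_model. intros Hse. rewrite !nanswer_setE, !nsat_prog_nreduct_nunion.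
  intros [Hc [[HZ1 HZ] Hmin]].
  assert (HZ2 : nsat_prog Z (nreduct N2 Z)) by (apply (Hse Z Z Hc (lsubset_refl Z)); auto).
  split; [exact Hc|]. split; [auto|].
  intros X HXZ [HX2 HX]%nsat_prog_nreduct_nunion. apply Hmin; [exact HXZ|].
  apply nsat_prog_nreduct_nunion. split; [|exact HX].
  apply (Hse X Z Hc HXZ). auto.
Qed.

End StrongEquivalence.

Theorem proposition4 (A : Type) (O1 O2 : wprogram A) :
  wf_wprogram O1 -> wf_wprogram O2 ->
  (wstrong_equiv O1 O2 <-> nstrong_equiv (tr_prog O1) (tr_prog O2)).
Proof.
  intros H1 H2. split.
  - intros Hse.
    assert (Hse' : wstrong_equiv O2 O1) by (intros P HP Z; symmetry; now apply Hse).
    assert (Hnse : forall X Y, consistent Y -> lsubset X Y ->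
                     nse_model (tr_prog O1) X Y <-> nse_model (tr_prog O2) X Y).
    { intros X Y Hc HXY. rewrite <- !wse_model_tr by assumption.
      split; apply wstrong_equiv_wse_model; assumption. }
    intros N Z. split; apply nanswer_set_nunion_se; [exact Hnse|].
    intros X Y Hc HXY. symmetry. now apply Hnse.
  - intros Hnse P HP Z.
    rewrite !wanswer_set_tr, !tr_prog_wunion by (apply wf_wunion; assumption).
    apply Hnse.
Qed.
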